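(* Let $a_1,\dots,a_{12},b_1,\dots,b_{12}\in\mathbb{C}^6$ be row vectors of length 6 such that the three $12\times12$ matrices $M$ with rows $(a_k\,|\,b_k)$, $k=1,\dots,12$; $M_R$ with rows, in order, $(a_1|a_2),(b_1|b_2),(a_3|a_4),(b_3|b_4),(a_5|a_6),(b_5|b_6),(a_7|a_8),(b_7|b_8),(a_9|a_{10}),(b_9|b_{10}),(a_{11}|a_{12}),(b_{11}|b_{12})$; $M_\Gamma$ with rows, in order, $(a_1|a_3),(a_2|a_4),(b_1|b_3),(b_2|b_4),(a_5|a_7),(a_6|a_8),(b_5|b_7),(b_6|b_8),(a_9|a_{11}),(a_{10}|a_{12}),(b_9|b_{11}),(b_{10}|b_{12})$ are all unitary (here $(x|y)$ denotes the concatenation of two length-6 vectors into a length-12 row). Define further vectors by, for $k=1,\dots,4$: $c_{4+k}=a_k,\ d_{4+k}=b_k,\ e_{8+k}=a_k,\ f_{8+k}=b_k$; $c_{8+k}=a_{4+k},\ d_{8+k}=b_{4+k},\ e_k=a_{4+k},\ f_k=b_{4+k}$; $c_k=a_{8+k},\ d_k=b_{8+k},\ e_{4+k}=a_{8+k},\ f_{4+k}=b_{8+k}$. Let $U$ be the $36\times36$ matrix each of whose rows is split into six consecutive column blocks of length 6, where every row has exactly two possibly nonzero adjacent column blocks and all other entries zero, specified as follows (a pair $xy$ placed in column blocks $(p,p+1)$): rows 1–2: $a_1b_1,a_2b_2$ in blocks (1,2); rows 3–4: $c_1d_1,c_2d_2$ in (3,4); rows 5–6: $e_1f_1,e_2f_2$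 in (5,6); rows 7–8: $a_3b_3,a_4b_4$ in (1,2); rows 9–10: $c_3d_3,c_4d_4$ in (3,4); rows 11–14: $e_3f_3,e_4f_4,e_5f_5,e_6f_6$ in (5,6); rows 15–16: $a_5b_5,a_6b_6$ in (1,2); rows 17–18: $c_5d_5,c_6d_6$ in (3,4); rows 19–20: $e_7f_7,e_8f_8$ in (5,6); rows 21–22: $a_7b_7,a_8b_8$ in (1,2); rows 23–26: $c_7d_7,c_8d_8,c_9d_9,c_{10}d_{10}$ in (3,4); rows 27–28: $e_9f_9,e_{10}f_{10}$ in (5,6); rows 29–30: $a_9b_9,a_{10}b_{10}$ in (1,2); rows 31–32: $c_{11}d_{11},c_{12}d_{12}$ in (3,4); rows 33–34: $e_{11}f_{11},e_{12}f_{12}$ in (5,6); rows 35–36: $a_{11}b_{11},a_{12}b_{12}$ in (1,2). Then $U$ is a multiunitary matrix of size 36.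
   Context: Index rows and columns of a $36\times36$ matrix by pairs $(i,j)$, $i,j\in\{1,\dots,6\}$, with $(i,j)\mapsto 6(i-1)+j$. The reshuffling of $M$ is $M^R_{(i,j),(k,l)}=M_{(i,k),(j,l)}$ and the partial transpose is $M^\Gamma_{(i,j),(k,l)}=M_{(i,l),(k,j)}$. A matrix $U$ of size 36 is multiunitary if $U$, $U^R$ and $U^\Gamma$ are all unitary. *)

(* Complex scalars: an arbitrary numClosedFieldType C
   (e.g. the complex numbers), with conjugation x^* . *)
From HB Require Import structures.
From mathcomp Require Import all_boot all_order all_algebra.
Set Implicit Arguments. Unset Strict Implicit. Unset Printing Implicit Defensive.
Import Order.TTheory GRing.Theory Num.Theory.
Local Open Scope ring_scope.

Section Defs.
Variable C : numClosedFieldType.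

Definition adjmx (n : nat) (M : 'M[C]_n) : 'M[C]_n := (map_mx (fun x => x^*) M)^T.

Definition unitary (n : nat) (M : 'M[C]_n) : Prop :=
  M *m adjmx M = 1%:M /\ adjmx M *m M = 1%:M.

(* index (i,j) |-> 6 i + j (0-based version of 6(i-1)+j) *)
Definition pidx (i j : nat) : 'I_36 := inord (6 * i + j).

(* reshuffling: M^R_{(i,j),(k,l)} = M_{(i,k),(j,l)} *)
Definition reshuffle (M : 'M[C]_36) : 'M[C]_36 :=
  \matrix_(r < 36, s < 36)
    M (pidx (r %/ 6) (s %/ 6)) (pidx (r %% 6) (s %% 6)).

(* partial transpose: M^Gamma_{(i,j),(k,l)} = M_{(i,l),(k,j)} *)
Definition ptranspose (M : 'M[C]_36) : 'M[C]_36 :=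
  \matrix_(r < 36, s < 36)
    M (pidx (r %/ 6) (s %% 6)) (pidx (s %/ 6) (r %% 6)).

Definition multiunitary (U : 'M[C]_36) : Prop :=
  [/\ unitary U, unitary (reshuffle U) & unitary (ptranspose U)].

Definition cat6 (x y : 'rV[C]_6) : 'rV[C]_12 :=
  \row_(j < 12) (if (j < 6)%N then x 0 (inord j) else y 0 (inord (j - 6))).

Definition mx_of_rows (n : nat) (s : seq 'rV[C]_n) : 'M[C]_n :=
  \matrix_(k < n, j < n) (nth 0 s k) 0 j.

Definition blk (p : nat) (x y : 'rV[C]_6) : 'rV[C]_36 :=
  \row_(j < 36) (if (j %/ 6 == p.-1)%N then x 0 (inord (j %% 6))
                 else if (j %/ 6 == p)%N then y 0 (inord (j %% 6)) else 0).

(* 1-based access to a family indexed by 'I_12 *)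
Definition at1 (a : 'I_12 -> 'rV[C]_6) (n : nat) : 'rV[C]_6 := a (inord n.-1).

Definition cvec (a : 'I_12 -> 'rV[C]_6) (n : nat) : 'rV[C]_6 :=
  if (n <= 4)%N then at1 a (n + 8) else at1 a (n - 4).
Definition evec (a : 'I_12 -> 'rV[C]_6) (n : nat) : 'rV[C]_6 :=
  if (n <= 8)%N then at1 a (n + 4) else at1 a (n - 8).

Definition Mmat (a b : 'I_12 -> 'rV[C]_6) : 'M[C]_12 :=
  mx_of_rows [seq cat6 (at1 a k) (at1 b k) | k <- iota 1 12].

Definition MRmat (a b : 'I_12 -> 'rV[C]_6) : 'M[C]_12 :=
  let A := at1 a in let B := at1 b in
  mx_of_rows [:: cat6 (A 1) (A 2); cat6 (B 1) (B 2); cat6 (A 3) (A 4); cat6 (B 3) (B 4);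
                 cat6 (A 5) (A 6); cat6 (B 5) (B 6); cat6 (A 7) (A 8); cat6 (B 7) (B 8);
                 cat6 (A 9) (A 10); cat6 (B 9) (B 10); cat6 (A 11) (A 12); cat6 (B 11) (B 12)].

Definition MGmat (a b : 'I_12 -> 'rV[C]_6) : 'M[C]_12 :=
  let A := at1 a in let B := at1 b in
  mx_of_rows [:: cat6 (A 1) (A 3); cat6 (A 2) (A 4); cat6 (B 1) (B 3); cat6 (B 2) (B 4);
                 cat6 (A 5) (A 7); cat6 (A 6) (A 8); cat6 (B 5) (B 7); cat6 (B 6) (B 8);
                 cat6 (A 9) (A 11); cat6 (A 10) (A 12); cat6 (B 9) (B 11); cat6 (B 10) (B 12)].

Definition Umat (a b : 'I_12 -> 'rV[C]_6) : 'M[C]_36 :=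
  let A := at1 a in let B := at1 b in
  let Cv := cvec a in let D := cvec b in
  let E := evec a in let F := evec b in
  mx_of_rows
    [:: blk 1 (A 1) (B 1); blk 1 (A 2) (B 2);
        blk 3 (Cv 1) (D 1); blk 3 (Cv 2) (D 2);
        blk 5 (E 1) (F 1); blk 5 (E 2) (F 2);
        blk 1 (A 3) (B 3); blk 1 (A 4) (B 4);
        blk 3 (Cv 3) (D 3); blk 3 (Cv 4) (D 4);
        blk 5 (E 3) (F 3); blk 5 (E 4) (F 4);
        blk 5 (E 5) (F 5); blk 5 (E 6) (F 6);
        blk 1 (A 5) (B 5); blk 1 (A 6) (B 6);
        blk 3 (Cv 5) (D 5); blk 3 (Cv 6) (D 6);
        blk 5 (E 7) (F 7); blk 5 (E 8) (F 8);
        blk 1 (A 7) (B 7); blk 1 (A 8) (B 8);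
        blk 3 (Cv 7) (D 7); blk 3 (Cv 8) (D 8);
        blk 3 (Cv 9) (D 9); blk 3 (Cv 10) (D 10);
        blk 5 (E 9) (F 9); blk 5 (E 10) (F 10);
        blk 1 (A 9) (B 9); blk 1 (A 10) (B 10);
        blk 3 (Cv 11) (D 11); blk 3 (Cv 12) (D 12);
        blk 5 (E 11) (F 11); blk 5 (E 12) (F 12);
        blk 1 (A 11) (B 11); blk 1 (A 12) (B 12)].

End Defs.

(* U, U^R and U^Gamma arise from the block-diagonal matrices diag(M, M, M),
   diag(M_R, M_R, M_R) and diag(M_Gamma^T, M_Gamma^T, M_Gamma^T) by permuting
   rows and columns.  Block-diagonal matrices with unitary blocks and
   permutation matrices are unitary, hence so are U, U^R and U^Gamma.  The
   three permutation equivalences hold entrywise for arbitrary a and b, so they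
   are checked by computation on symbolic copies of the matrices whose entries
   only record which vector and which coordinate they come from. *)
From mathcomp Require Import all_boot all_order all_algebra.
From mathcomp Require Import fingroup perm mxtens zify.
Set Implicit Arguments. Unset Strict Implicit. Unset Printing Implicit Defensive.
Import GRing.Theory Num.Theory.
Local Open Scope ring_scope.

Lemma nth_perm_iota_ltn n (f : seq nat) k :
  perm_eq f (iota 0 n) -> (k < n)%N -> (nth 0 f k < n)%N.
Proof.
move=> pf lt_kn; have : nth 0 f k \in f by rewrite mem_nth // (perm_size pf) size_iota.
by rewrite (perm_mem pf) mem_iota.
Qed.

Lemma inord_nth_inj n (f : seq nat) :
  perm_eq f (iota 0 n.+1) -> injective (fun i : 'I_n.+1 => inord (nth 0 f i) : 'I_n.+1).
Proof.
move=> pf i j /(congr1 val); rewrite /= !inordK ?(nth_perm_iota_ltn pf) // => /eqP.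
rewrite nth_uniq ?(perm_size pf) ?size_iota ?(perm_uniq pf) ?iota_uniq //.
by move=> /eqP /val_inj.
Qed.

Section Unitary.
Variable C : numClosedFieldType.

Lemma adjmxM n (M N : 'M[C]_n) : adjmx (M *m N) = adjmx N *m adjmx M.
Proof. by rewrite /adjmx map_mxM trmx_mul. Qed.

Lemma adjmx_tr n (M : 'M[C]_n) : adjmx M^T = (adjmx M)^T.
Proof. by rewrite /adjmx -map_trmx. Qed.

Lemma adjmx_perm n (p : 'S_n) : adjmx (perm_mx p : 'M[C]_n) = perm_mx p^-1.
Proof. by rewrite /adjmx map_perm_mx tr_perm_mx. Qed.

Lemma adjmx_tens m n (M : 'M[C]_m) (N : 'M[C]_n) :
  adjmx (M *t N) = adjmx M *t adjmx N.
Proof. by rewrite /adjmx map_mxT trmx_tens. Qed.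

Lemma adjmx1 n : adjmx (1%:M : 'M[C]_n) = 1%:M.
Proof. by rewrite /adjmx map_mx1 trmx1. Qed.

Lemma mulmx_adj_unitary n (M : 'M[C]_n) : M *m adjmx M = 1%:M -> unitary M.
Proof. by move=> MM; split; last exact: mulmx1C. Qed.

Lemma unitary1 n : unitary (1%:M : 'M[C]_n).
Proof. by apply: mulmx_adj_unitary; rewrite adjmx1 mulmx1. Qed.

Lemma unitaryM n (M N : 'M[C]_n) : unitary M -> unitary N -> unitary (M *m N).
Proof.
move=> [uM _] [uN _]; apply: mulmx_adj_unitary.
by rewrite adjmxM mulmxA -(mulmxA M) uN mulmx1 uM.
Qed.

Lemma unitary_perm_mx n (p : 'S_n) : unitary (perm_mx p : 'M[C]_n).
Proof. by apply: mulmx_adj_unitary; rewrite adjmx_perm -perm_mxM mulgV perm_mx1. Qed.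

Lemma unitary_tr n (M : 'M[C]_n) : unitary M -> unitary M^T.
Proof.
move=> [_ uM]; apply: mulmx_adj_unitary.
by rewrite adjmx_tr -trmx_mul uM trmx1.
Qed.

Lemma tens1mx1 m n : (1%:M : 'M[C]_m) *t (1%:M : 'M[C]_n) = 1%:M.
Proof.
apply/matrixP=> i j.
case: (mxtens_indexP i) => i1 i2; case: (mxtens_indexP j) => j1 j2.
rewrite tensmxE !mxE -natrM mulnb.
by rewrite (inj_eq (can_inj (@mxtens_indexK m n))) xpair_eqE.
Qed.

Lemma unitary_tens m n (M : 'M[C]_m) (N : 'M[C]_n) :
  unitary M -> unitary N -> unitary (M *t N).
Proof.
move=> [uM _] [uN _]; apply: mulmx_adj_unitary.
by rewrite adjmx_tens tensmx_mul uM uN tens1mx1.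
Qed.

Lemma unitary_permuted n (T B : 'M[C]_n) (p q : 'S_n) :
  (forall i j, T i j = B (p i) (q j)) -> unitary B -> unitary T.
Proof.
move=> TE uB; have -> : T = perm_mx p *m B *m perm_mx q^-1.
  by apply/matrixP=> i j; rewrite -row_permE -col_permE !mxE TE.
by rewrite -mulmxA; exact: unitaryM (unitary_perm_mx p) (unitaryM uB (unitary_perm_mx q^-1)).
Qed.

Lemma unitary_seq_permuted n (T B : 'M[C]_n.+1) (f g : seq nat) :
  perm_eq f (iota 0 n.+1) -> perm_eq g (iota 0 n.+1) ->
  (forall i j : 'I_n.+1, T i j = B (inord (nth 0 f i)) (inord (nth 0 g j))) ->
  unitary B -> unitary T.
Proof.
move=> pf pg TE.
apply: (unitary_permuted (p := perm (inord_nth_inj pf)) (q := perm (inord_nth_inj pg))).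
by move=> i j; rewrite !permE TE.
Qed.

End Unitary.

(* (false, k) stands for a_k and (true, k) for b_k; an entry Some (x, j) is
   coordinate j of x and None is 0. *)
Definition svec := (bool * nat)%type.
Definition sentry := option (svec * nat).
Definition smatrix := nat -> nat -> sentry.

Definition sA (k : nat) : svec := (false, k).
Definition sB (k : nat) : svec := (true, k).

Definition scat6 (x y : svec) (j : nat) : sentry :=
  if (j < 6)%N then Some (x, j) else Some (y, j - 6)%N.

Definition sblk (p : nat) (x y : svec) (j : nat) : sentry :=
  if (j %/ 6 == p.-1)%N then Some (x, j %% 6)%N
  else if (j %/ 6 == p)%N then Some (y, j %% 6)%N else None.

Definition smx_of_rows (T : Type) (x0 : T) (srow : T -> nat -> sentry) (s : seq T) :
  smatrix :=
  fun i j => srow (nth x0 s i) j.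

Definition sreshuffle (M : smatrix) : smatrix :=
  fun r s => M (6 * (r %/ 6) + s %/ 6)%N (6 * (r %% 6) + s %% 6)%N.

Definition sptranspose (M : smatrix) : smatrix :=
  fun r s => M (6 * (r %/ 6) + s %% 6)%N (6 * (s %/ 6) + r %% 6)%N.

Definition strmx (M : smatrix) : smatrix := fun i j => M j i.

Definition sdiag (n : nat) (M : smatrix) : smatrix :=
  fun i j => if (i %/ n == j %/ n)%N then M (i %% n)%N (j %% n)%N else None.

Definition sym_permuted (n : nat) (T B : smatrix) (f g : seq nat) : bool :=
  [&& perm_eq f (iota 0 n), perm_eq g (iota 0 n) &
      all (fun i => all (fun j => T i j == B (nth 0 f i) (nth 0 g j)) (iota 0 n)) (iota 0 n)].

Section Represents.
Variable C : numClosedFieldType.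
Variables a b : 'I_12 -> 'rV[C]_6.

Definition vec_of (x : svec) : 'rV[C]_6 := at1 (if x.1 then b else a) x.2.

Definition entry_of (e : sentry) : C := if e is Some (x, j) then vec_of x 0 (inord j) else 0.

Definition represents m n (M : 'M[C]_(m, n)) (T : smatrix) : Prop :=
  forall i j, M i j = entry_of (T i j).

Lemma cat6_entry x y j : cat6 (vec_of x) (vec_of y) 0 j = entry_of (scat6 x y j).
Proof. by rewrite mxE /scat6; case: ifP. Qed.

Lemma blk_entry p x y j : blk p (vec_of x) (vec_of y) 0 j = entry_of (sblk p x y j).
Proof. by rewrite mxE /sblk; case: ifP => // _; case: ifP. Qed.

Lemma represents_rows n (T : Type) (x0 : T) (row : T -> 'rV[C]_n)
    (srow : T -> nat -> sentry) (s : seq T) :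
  size s = n -> (forall x j, row x 0 j = entry_of (srow x j)) ->
  represents (mx_of_rows (map row s)) (smx_of_rows x0 srow s).
Proof. by move=> sz rowE i j; rewrite mxE (nth_map x0) ?sz. Qed.

Lemma represents_reshuffle M T : represents M T -> represents (reshuffle M) (sreshuffle T).
Proof.
move=> ME r s; rewrite mxE ME /pidx /sreshuffle !inordK //.
all: by have := ltn_ord r; have := ltn_ord s; lia.
Qed.

Lemma represents_ptranspose M T : represents M T -> represents (ptranspose M) (sptranspose T).
Proof.
move=> ME r s; rewrite mxE ME /pidx /sptranspose !inordK //.
all: by have := ltn_ord r; have := ltn_ord s; lia.
Qed.

Lemma represents_tr m n (M : 'M[C]_(m, n)) T : represents M T -> represents M^T (strmx T).
Proof. by move=> ME i j; rewrite mxE ME. Qed.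

Lemma represents_tens1 m n (M : 'M[C]_n) T :
  represents M T -> represents ((1%:M : 'M[C]_m) *t M) (sdiag n T).
Proof.
move=> ME i j; rewrite !mxE ME /sdiag -val_eqE /=.
by case: eqP => _; rewrite ?mul1r ?mul0r.
Qed.

Lemma represents_unitary n (M N : 'M[C]_n.+1) T U f g :
  represents M T -> represents N U -> sym_permuted n.+1 T U f g ->
  unitary N -> unitary M.
Proof.
move=> ME NE /and3P[pf pg /allP TU].
apply: (unitary_seq_permuted pf pg) => i j.
have mem (k : 'I_n.+1) : (k : nat) \in iota 0 n.+1 by rewrite mem_iota ltn_ord.
have /eqP Tij := allP (TU i (mem i)) j (mem j).
by rewrite ME NE !inordK ?(nth_perm_iota_ltn pf) ?(nth_perm_iota_ltn pg) // Tij.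
Qed.

End Represents.

Definition U_rows : seq (nat * nat) :=
  [:: (1, 1); (1, 2); (3, 9); (3, 10); (5, 5); (5, 6);
      (1, 3); (1, 4); (3, 11); (3, 12); (5, 7); (5, 8);
      (5, 9); (5, 10); (1, 5); (1, 6); (3, 1); (3, 2);
      (5, 11); (5, 12); (1, 7); (1, 8); (3, 3); (3, 4);
      (3, 5); (3, 6); (5, 1); (5, 2); (1, 9); (1, 10);
      (3, 7); (3, 8); (5, 3); (5, 4); (1, 11); (1, 12)]%N.

Definition MR_rows : seq (svec * svec) :=
  [:: (sA 1, sA 2); (sB 1, sB 2); (sA 3, sA 4); (sB 3, sB 4);
      (sA 5, sA 6); (sB 5, sB 6); (sA 7, sA 8); (sB 7, sB 8);
      (sA 9, sA 10); (sB 9, sB 10); (sA 11, sA 12); (sB 11, sB 12)]%N.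

Definition MG_rows : seq (svec * svec) :=
  [:: (sA 1, sA 3); (sA 2, sA 4); (sB 1, sB 3); (sB 2, sB 4);
      (sA 5, sA 7); (sA 6, sA 8); (sB 5, sB 7); (sB 6, sB 8);
      (sA 9, sA 11); (sA 10, sA 12); (sB 9, sB 11); (sB 10, sB 12)]%N.

Definition sU : smatrix :=
  smx_of_rows (0, 0)%N (fun d => sblk d.1 (sA d.2) (sB d.2)) U_rows.
Definition sM : smatrix := smx_of_rows 0%N (fun k => scat6 (sA k) (sB k)) (iota 1 12).
Definition sMR : smatrix := smx_of_rows (sA 0, sA 0) (fun d => scat6 d.1 d.2) MR_rows.
Definition sMG : smatrix := smx_of_rows (sA 0, sA 0) (fun d => scat6 d.1 d.2) MG_rows.

(* Row r of U, U^R and U^Gamma is row (f r %% 12) of the (f r %/ 12)-th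
   diagonal block, f being the row permutation below; only U^Gamma also needs
   its columns permuted. *)
Definition U_row_perm : seq nat :=
  [:: 0; 1; 20; 21; 28; 29; 2; 3; 22; 23; 30; 31; 32; 33; 4; 5; 12; 13;
      34; 35; 6; 7; 14; 15; 16; 17; 24; 25; 8; 9; 18; 19; 26; 27; 10; 11]%N.
Definition UR_row_perm : seq nat :=
  [:: 0; 1; 20; 21; 28; 29; 2; 3; 22; 23; 30; 31; 16; 17; 24; 25; 8; 9;
      18; 19; 26; 27; 10; 11; 32; 33; 4; 5; 12; 13; 34; 35; 6; 7; 14; 15]%N.
Definition UG_row_perm : seq nat :=
  [:: 24; 25; 26; 27; 28; 29; 30; 31; 32; 33; 34; 35; 0; 1; 2; 3; 4; 5;
      6; 7; 8; 9; 10; 11; 12; 13; 14; 15; 16; 17; 18; 19; 20; 21; 22; 23]%N.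
Definition UG_col_perm : seq nat :=
  [:: 24; 25; 4; 5; 20; 21; 26; 27; 6; 7; 22; 23; 16; 17; 32; 33; 0; 1;
      18; 19; 34; 35; 2; 3; 8; 9; 12; 13; 28; 29; 10; 11; 14; 15; 30; 31]%N.

Lemma U_permuted : sym_permuted 36 sU (sdiag 12 sM) U_row_perm (iota 0 36).
Proof. by vm_compute. Qed.

Lemma UR_permuted : sym_permuted 36 (sreshuffle sU) (sdiag 12 sMR) UR_row_perm (iota 0 36).
Proof. by vm_compute. Qed.

Lemma UG_permuted :
  sym_permuted 36 (sptranspose sU) (sdiag 12 (strmx sMG)) UG_row_perm UG_col_perm.
Proof. by vm_compute. Qed.

Section Construction.
Variable C : numClosedFieldType.
Variables a b : 'I_12 -> 'rV[C]_6.

Lemma Umat_represents : represents a b (Umat a b) sU.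
Proof.
have -> : Umat a b =
    mx_of_rows [seq blk d.1 (vec_of a b (sA d.2)) (vec_of a b (sB d.2)) | d <- U_rows].
  by [].
by apply: represents_rows => // d j; rewrite blk_entry.
Qed.

Lemma Mmat_represents : represents a b (Mmat a b) sM.
Proof.
have -> : Mmat a b =
    mx_of_rows [seq cat6 (vec_of a b (sA k)) (vec_of a b (sB k)) | k <- iota 1 12].
  by [].
by apply: represents_rows => // k j; rewrite cat6_entry.
Qed.

Lemma MRmat_represents : represents a b (MRmat a b) sMR.
Proof.
have -> : MRmat a b = mx_of_rows [seq cat6 (vec_of a b d.1) (vec_of a b d.2) | d <- MR_rows].
  by [].
by apply: represents_rows => // d j; rewrite cat6_entry.
Qed.

Lemma MGmat_represents : represents a b (MGmat a b) sMG.
Proof.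
have -> : MGmat a b = mx_of_rows [seq cat6 (vec_of a b d.1) (vec_of a b d.2) | d <- MG_rows].
  by [].
by apply: represents_rows => // d j; rewrite cat6_entry.
Qed.

Lemma unitary_permuted_diag3 (M : 'M[C]_36) (N : 'M[C]_12) T U f g :
  represents a b M T -> represents a b N U -> sym_permuted 36 T (sdiag 12 U) f g ->
  unitary N -> unitary M.
Proof.
move=> ME NE TU uN.
exact: represents_unitary ME (represents_tens1 (m := 3) NE) TU
  (unitary_tens (unitary1 C 3) uN).
Qed.

End Construction.

Theorem mainTheorem14 (C : numClosedFieldType) (a b : 'I_12 -> 'rV[C]_6) :
  unitary (Mmat a b) -> unitary (MRmat a b) -> unitary (MGmat a b) ->
  multiunitary (Umat a b).
Proof.
move=> uM uMR uMG; split.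
- exact: unitary_permuted_diag3 (Umat_represents a b) (Mmat_represents a b) U_permuted uM.
- exact: unitary_permuted_diag3 (represents_reshuffle (Umat_represents a b))
    (MRmat_represents a b) UR_permuted uMR.
- exact: unitary_permuted_diag3 (represents_ptranspose (Umat_represents a b))
    (represents_tr (MGmat_represents a b)) UG_permuted (unitary_tr uMG).
Qed.
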